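(* Let $t\ge1$, $k\ge t+1$, $v\ge 2$. If an OA$(t+1,k+1,v)$ exists, then a simple COA$_\lambda(t,k+t-1,v)$ exists for every positive integer $\lambda\le v$.
   Context: An OA$_\lambda(t,k,v)$ is a $\lambda v^t\times k$ array over a $v$-set $V$ such that every $t$ columns contain every $t$-tuple exactly $\lambda$ times; OA$(t,k,v)$ means $\lambda=1$. A COA$_\lambda(t,k,v)$ is a $\lambda v^t\times k$ array over $V$ in which every set of $t$ consecutive columns contains every $t$-tuple exactly $\lambda$ times. It is simple if for any two distinct sets of $t$ consecutive columns sharing exactly $i$ columns ($0\le i\le t-1$), the subarray on the $2t-i$ columns of their union contains each $(2t-i)$-tuple at most once. *)

From mathcomp Require Import all_boot.
Unset Implicit Arguments. Unset Printing Implicit Defensive.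

Definition array (N k v : nat) := 'I_N -> 'I_k -> 'I_v.

Definition is_OA (lam t k v : nat) (A : array (lam * v ^ t) k v) : Prop :=
  forall c : 'I_t -> 'I_k, injective c ->
  forall x : 'I_t -> 'I_v,
    #|[set r | [forall j : 'I_t, A r (c j) == x j]]| = lam.

Definition OA_exists (t k v : nat) : Prop :=
  exists A : array (1 * v ^ t) k v, is_OA 1 t k v A.

Definition window_match (N t k v : nat) (A : array N k v) (i : nat)
  (r : 'I_N) (x : 'I_t -> 'I_v) : bool :=
  [forall j : 'I_t, forall c : 'I_k, (val c == i + j) ==> (A r c == x j)].

Definition is_COA (lam t k v : nat) (A : array (lam * v ^ t) k v) : Prop :=
  forall i : nat, i + t <= k ->
  forall x : 'I_t -> 'I_v,
    #|[set r | window_match (lam * v ^ t) t k v A i r x]| = lam.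

Definition in_window (t : nat) (i : nat) (k : nat) (c : 'I_k) : bool :=
  (i <= c) && (c < i + t).

(* Simple: for any two distinct windows (they then share exactly some
   i columns, 0 <= i <= t-1), the subarray on the union of their columns
   contains each tuple at most once, i.e. no two distinct rows agree on all
   columns of the union. *)
Definition is_simple_COA (lam t k v : nat) (A : array (lam * v ^ t) k v) : Prop :=
  forall a b : nat, a + t <= k -> b + t <= k -> a != b ->
  forall r1 r2 : 'I_(lam * v ^ t), r1 != r2 ->
  exists c : 'I_k, (in_window t a k c || in_window t b k c) && (A r1 c != A r2 c).

From mathcomp Require Import all_boot.
From mathcomp Require Import zify.

Set Implicit Arguments.
Unset Strict Implicit.

(* Construction of a simple COA_lam(t, k+t-1, v) from an OA(t+1, k+1, v) B,
   for t < k and lam <= v.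

   Rows: keep exactly the rows y of B whose entry in column 0 is < lam.
   Since B has strength t+1, for any t further columns and any t-tuple x
   there is exactly one row of B for each value of column 0, so exactly lam
   kept rows show x there; in particular lam * v^t rows are kept.
   Columns: column c of the new array is column 1 + (c mod k) of B.
   A window of t < k consecutive columns is sent to t distinct columns of B,
   which gives the COA property.  Two distinct windows a < b cover t+1
   columns a, ..., a+t-1, max(a+t, b) that lie within a range of length k,
   hence are sent to t+1 distinct columns of B; as B has index 1 and
   strength t+1, two rows agreeing there coincide, which gives simplicity. *)

Lemma card_fiber_sum (T J : finType) (P : pred T) (g : T -> J) :
  #|[set y | P y]| = \sum_(j : J) #|[set y | P y && (g y == j)]|.
Proof.
rewrite -sum1_card (partition_big g xpredT) //=.
by apply: eq_bigr => j _; rewrite -sum1_card; apply: eq_bigl => y; rewrite !inE.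
Qed.

Lemma OA_rows_agree (s K v : nat) (B : array (1 * v ^ s) K v) :
  is_OA 1 s K v B -> forall c : 'I_s -> 'I_K, injective c ->
  forall y1 y2, (forall j, B y1 (c j) = B y2 (c j)) -> y1 = y2.
Proof.
move=> HB c c_inj y1 y2 agree.
have /eqP/cards1P [y0 fiber1] := HB c c_inj (fun j => B y1 (c j)).
have in1 : y1 \in [set r | [forall j, B r (c j) == B y1 (c j)]].
  by rewrite inE; apply/forallP.
have in2 : y2 \in [set r | [forall j, B r (c j) == B y1 (c j)]].
  by rewrite inE; apply/forallP => j; rewrite agree.
by move: in1 in2; rewrite fiber1 !inE => /eqP -> /eqP ->.
Qed.

(* In an OA(t+1, K+1, v), for any t distinct columns other than column 0 and
   any t-tuple x, exactly lam rows show x on these columns and have an entry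
   < lam in column 0: each value of column 0 completes x to a (t+1)-tuple
   occurring exactly once. *)
Lemma OA_count_first_column_below (t K v lam : nat)
    (B : array (1 * v ^ t.+1) K.+1 v) :
  is_OA 1 t.+1 K.+1 v B -> lam <= v ->
  forall cw : 'I_t -> 'I_K, injective cw -> forall x : 'I_t -> 'I_v,
  #|[set y | (B y ord0 < lam) && [forall j, B y (lift ord0 (cw j)) == x j]]|
    = lam.
Proof.
move=> HB lam_le_v cw cw_inj x.
pose col (j : 'I_t.+1) := if unlift ord0 j is Some j' then lift ord0 (cw j')
                          else ord0.
have col_inj : injective col.
  move=> i1 i2; rewrite /col.
  by case: unliftP => [j1 ->|->]; case: unliftP => [j2 ->|->] // /lift_inj/cw_inj ->.
pose tuple_at (s : 'I_v) (j : 'I_t.+1) :=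
  if unlift ord0 j is Some j' then x j' else s.
have fiber (s : 'I_v) : #|[set y | ((B y ord0 < lam) &&
    [forall j, B y (lift ord0 (cw j)) == x j]) && (B y ord0 == s)]|
    = (s < lam : nat).
  case: (ltnP s lam) => [s_lt|s_ge]; last first.
    apply/eqP; rewrite cards_eq0; apply/eqP/setP => y; rewrite !inE.
    apply/negbTE/negP => /andP [/andP [lt _] /eqP y0].
    by move: lt; rewrite y0 ltnNge s_ge.
  apply: etrans (HB col col_inj (tuple_at s)); apply: eq_card => y; rewrite !inE.
  apply/idP/forallP => [/andP [/andP [_ /forallP matches] /eqP y0] j|matches].
    by rewrite /col /tuple_at; case: unliftP => [j' _|_]; [apply: matches|rewrite y0].
  have /eqP y0 := matches ord0; rewrite /col /tuple_at unlift_none in y0.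
  rewrite y0 s_lt eqxx andbT /=; apply/forallP => j.
  by have := matches (lift ord0 j); rewrite /col /tuple_at liftK.
rewrite (card_fiber_sum _ (fun y => B y ord0)) (eq_bigr _ (fun s _ => fiber s)).
transitivity (\sum_(s < v | s < lam) 1).
  by rewrite [RHS]big_mkcond; apply: eq_bigr => s _; case: (s < lam).
by rewrite -(big_ord_widen _ (fun _ => 1) lam_le_v) sum_nat_const card_ord muln1.
Qed.

Lemma OA_card_first_column_below (t K v lam : nat)
    (B : array (1 * v ^ t.+1) K.+1 v) :
  is_OA 1 t.+1 K.+1 v B -> lam <= v -> t <= K ->
  #|[set y | B y ord0 < lam]| = lam * v ^ t.
Proof.
move=> HB lam_le_v t_le_K.
have widen_inj : injective (widen_ord t_le_K) by move=> i j [] /val_inj.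
pose g y := [ffun j : 'I_t => B y (lift ord0 (widen_ord t_le_K j))].
rewrite (card_fiber_sum _ g) (eq_bigr (fun _ => lam)) => [|x _].
  by rewrite sum_nat_const card_ffun !card_ord mulnC.
rewrite -[RHS](OA_count_first_column_below HB lam_le_v widen_inj x).
apply: eq_card => y; rewrite !inE; congr (_ && _).
apply/eqP/forallP => [<- j|matches]; first by rewrite ffunE.
by apply/ffunP => j; rewrite ffunE; apply/eqP.
Qed.

Lemma card_enum_val_pred (T : finType) (S : {set T}) (n : nat)
    (card_S : #|S| = n) (P : pred T) :
  #|[set r : 'I_n | P (enum_val (cast_ord (esym card_S) r))]|
    = #|[set y | (y \in S) && P y]|.
Proof.
have enum_inj : injective (fun r : 'I_n => enum_val (cast_ord (esym card_S) r)).
  by move=> r1 r2 /enum_val_inj /cast_ord_inj.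
rewrite -(card_imset _ enum_inj); apply: eq_card => y; rewrite inE.
apply/imsetP/andP => [[r]|[Sy Py]].
  by rewrite inE => Pr ->; split; rewrite ?enum_valP.
exists (cast_ord card_S (enum_rank_in Sy y)); last by rewrite cast_ordK enum_rankK_in.
by rewrite inE cast_ordK enum_rankK_in.
Qed.

Lemma window_match_eq (N t K v : nat) (A : array N K v) (i : nat) r x
    (F : nat -> 'I_v) :
  i + t <= K -> (forall c : 'I_K, A r c = F c) ->
  window_match N t K v A i r x = [forall j : 'I_t, F (i + j) == x j].
Proof.
move=> win A_F; apply/forallP/forallP => matches j.
- have c_lt : i + j < K by have := ltn_ord j; lia.
  by move/forallP: (matches j) => /(_ (Ordinal c_lt)); rewrite eqxx /= A_F.
- by apply/forallP => c; apply/implyP => /eqP c_eq; rewrite A_F c_eq.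
Qed.

Lemma simple_COA_of_union_separates (lam t n v : nat)
    (A : array (lam * v ^ t) n v) :
  (forall a b, a + t <= n -> b + t <= n -> a != b -> forall r1 r2,
     (forall c, in_window t a n c || in_window t b n c -> A r1 c = A r2 c) ->
     r1 = r2) ->
  is_simple_COA lam t n v A.
Proof.
move=> separates a b a_win b_win a_neq_b r1 r2 r_neq; apply/existsP.
apply: contraR r_neq => /existsPn differ; apply/eqP/(separates a b) => // c c_in.
by move: (differ c); rewrite c_in /= negbK => /eqP.
Qed.

Lemma eq_mod_window (k m x y : nat) :
  m <= x < m + k -> m <= y < m + k -> x %% k = y %% k -> x = y.
Proof.
move=> /andP[m_le_x x_lt] /andP[m_le_y y_lt] eq_mod.
wlog le_xy : x y m_le_x x_lt m_le_y y_lt eq_mod / x <= y.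
  move=> sym; case: (leqP x y) => [|/ltnW] le; first exact: sym.
  by symmetry; apply: sym.
have : k %| y - x by rewrite -eqn_mod_dvd // eq_mod.
case: (y - x =P 0) => [|nz /dvdn_leq]; lia.
Qed.

Section CyclicConstruction.

Variables (t k v lam : nat) (B : array (1 * v ^ t.+1) k.+1 v).
Hypotheses (OA_B : is_OA 1 t.+1 k.+1 v B) (lam_le_v : lam <= v) (t_lt_k : t < k).

Lemma k_gt0 : 0 < k.
Proof. exact: leq_ltn_trans (leq0n t) t_lt_k. Qed.

Definition fold_col (c : nat) : 'I_k.+1 := lift ord0 (Ordinal (ltn_pmod c k_gt0)).

Lemma fold_col_inj (m i j : nat) :
  m <= i < m + k -> m <= j < m + k -> fold_col i = fold_col j -> i = j.
Proof. by move=> i_in j_in /lift_inj [] /(eq_mod_window i_in j_in). Qed.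

Definition kept_rows : {set 'I_(1 * v ^ t.+1)} := [set y | B y ord0 < lam].

Lemma card_kept_rows : #|kept_rows| = lam * v ^ t.
Proof. exact: OA_card_first_column_below OA_B lam_le_v (ltnW t_lt_k). Qed.

Definition row_of (r : 'I_(lam * v ^ t)) : 'I_(1 * v ^ t.+1) :=
  enum_val (cast_ord (esym card_kept_rows) r).

Lemma row_of_inj : injective row_of.
Proof. by move=> r1 r2 /enum_val_inj /cast_ord_inj. Qed.

Definition coa_array (n : nat) : array (lam * v ^ t) n v :=
  fun r c => B (row_of r) (fold_col c).
Local Arguments coa_array n : clear implicits.

Lemma coa_array_COA (n : nat) : is_COA lam t n v (coa_array n).
Proof.
move=> i win x.
pose cw (j : 'I_t) : 'I_k := Ordinal (ltn_pmod (i + j) k_gt0).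
have in_range (j : 'I_t) : i <= i + j < i + k by have := ltn_ord j; lia.
have cw_inj : injective cw.
  move=> j1 j2 [] /(eq_mod_window (in_range j1) (in_range j2)) /eqP.
  by rewrite eqn_add2l => /eqP /val_inj.
have -> : [set r | window_match _ t _ v (coa_array n) i r x] =
    [set r | [forall j : 'I_t, B (row_of r) (fold_col (i + j)) == x j]].
  apply/setP => r; rewrite !inE.
  by rewrite (window_match_eq x (F := fun c => B (row_of r) (fold_col c)) win).
rewrite (card_enum_val_pred card_kept_rows
  (fun y => [forall j : 'I_t, B y (fold_col (i + j)) == x j])).
rewrite -[RHS](OA_count_first_column_below OA_B lam_le_v cw_inj x).
by apply: eq_card => y; rewrite !inE.
Qed.

Lemma union_columns (n a b : nat) :
  0 < t -> a < b -> b + t <= n -> n <= k + t - 1 ->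
  exists p : 'I_t.+1 -> 'I_n,
    (forall j, in_window t a n (p j) || in_window t b n (p j)) /\
    injective (fun j => fold_col (p j)).
Proof.
move=> t_gt0 a_lt_b b_win n_le.
pose pos (j : 'I_t.+1) := if j < t then a + j else maxn (a + t) b.
have pos_lt j : pos j < n by rewrite /pos; case: ifP; lia.
have pos_range j : a <= pos j < a + k by rewrite /pos; case: ifP; lia.
exists (fun j => Ordinal (pos_lt j)); split.
- move=> j; rewrite /in_window /= /pos; have := ltn_ord j.
  by case: ifP; case: (leqP (a + t) b) => *; apply/orP; [left|left|right|right]; lia.
- move=> i j /(fold_col_inj (pos_range i) (pos_range j)) /= eq_pos.
  apply: ord_inj; move: eq_pos; rewrite /pos; have := ltn_ord i; have := ltn_ord j.
  by case: ifP; case: ifP; lia.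
Qed.

Lemma coa_array_union_separates (n a b : nat) (r1 r2 : 'I_(lam * v ^ t)) :
  0 < t -> n <= k + t - 1 -> a + t <= n -> b + t <= n -> a != b ->
  (forall c, in_window t a n c || in_window t b n c ->
     coa_array n r1 c = coa_array n r2 c) ->
  r1 = r2.
Proof.
move=> t_gt0 n_le a_win b_win.
wlog a_lt_b : a b a_win b_win / a < b => [sym a_neq_b agree|_ agree].
  case: (ltngtP a b) => [lt|gt|eq_ab]; first exact: (sym a b).
  - by apply: (sym b a) => // [|c]; rewrite 1?eq_sym // orbC; apply: agree.
  - by rewrite eq_ab eqxx in a_neq_b.
have [p [p_in p_inj]] := union_columns t_gt0 a_lt_b b_win n_le.
apply: row_of_inj; apply: (OA_rows_agree OA_B p_inj) => j.
exact: agree (p j) (p_in j).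
Qed.

End CyclicConstruction.

Arguments coa_array {t k v lam B} OA_B lam_le_v t_lt_k n.

Unset Implicit Arguments.

Theorem mainTheorem6 (t k v : nat) :
  1 <= t -> t + 1 <= k -> 2 <= v ->
  OA_exists t.+1 k.+1 v ->
  forall lam : nat, 0 < lam -> lam <= v ->
  exists A : array (lam * v ^ t) (k + t - 1) v,
    is_COA lam t (k + t - 1) v A /\ is_simple_COA lam t (k + t - 1) v A.
Proof.
move=> t_gt0 t_lt_k _ [B OA_B] lam _ lam_le_v.
rewrite addn1 in t_lt_k.
exists (coa_array OA_B lam_le_v t_lt_k (k + t - 1)); split.
- exact: coa_array_COA.
- apply: simple_COA_of_union_separates => a b a_win b_win a_neq_b r1 r2.
  exact: coa_array_union_separates.
Qed.
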